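(* There exists a two-way optical interference automaton (2OIA) that recognizes the language $\{a^nb^{2^n}\mid n\in\mathbb{N}\}$ in time $O(2^n)$ on inputs of the form $a^nb^m$.
   Context: A two-way optical interference automaton (2OIA) is a deterministic machine with finite state set $Q$, start state $q_0$, accepting and rejecting states, finite input alphabet $\Sigma$, and tape alphabet $\Gamma=\Sigma\cup\{\text{¢},\$\}$. On input $w=w_1\cdots w_N$ the read-only tape holds ¢$w_1\cdots w_N\$$ in cells $0,1,\dots,N+1$, scanned by a two-way head. For each cell $m$ there is a monochromatic point light source at the point $(m,0)$ of the plane; all sources have the same wavelength $\lambda$ and the same initial amplitude $A_0$, and each source is at any moment either switched off or switched on with initial phase $0$ or $\pi$. A detector is located at a grid point $(j,k)$ with $j,k\in\{0,\tfrac12,1,\tfrac32,\dots,N+1\}$, pointing towards the source array; its field of vision is the cone making angle $\pi/4$ with the vertical line through it, so it sees exactly the sources at $(m,0)$ with $|m-j|\le k$. The resultant wave at the detector is $\sum A_0 r_m^{-1}e^{i(\phi_m+2\pi r_m/\lambda)}$, summed over the switched-on sources it sees, where $r_m$ is the distance from the source to the detector and $\phi_m\in\{0,\pi\}$ the source's phase; the detector outputs $\underline{1}$ if this resultant is nonzero and $\underline{0}$ otherwise. The transition function $\delta:Q\times\Gamma\times\{\underline0,\underline1\}\to Q\times\{\text{left},\text{right},\text{stay}\}\times\{\text{left},\text{right},\text{up},\text{down},\text{stay}\}\times\{\mathrm{toggle}(0),\mathrm{toggle}(\pi),-\}$ maps (state, scanned symbol, detector output) to a new state, a move of the head by one cell,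 a move of the detector by one grid step (of length $1/2$), and an action on the source of the currently scanned cell: $\mathrm{toggle}(\phi)$ switches it on with phase $\phi$ if it is off and switches it off if it is on; $-$ does nothing. Initially all sources are off, the machine is in $q_0$, the head is on cell $0$, and the detector is at a prescribed initial grid position. For a given source, a maximal sequence of toggles at consecutive time steps is called non-transient if its length is odd; there is a constant $k$ such that the machine crashes if it attempts a non-transient toggle sequence on a single source for the $(k+1)$-th time. The machine accepts when it is in an accepting state with detector output $\underline0$. Its running time is the total number of moves made by the head plus the number of moves made by the detector. A 2OIA recognizes a language $L$ if it accepts every input in $L$ and rejects every input not in $L$. *)

From Stdlib Require Import Reals List Arith Bool.
Import ListNotations.
Open Scope R_scope.

Inductive sym := SA | SB.

Inductive tsym := Cent | Dollar | Sym (s : sym).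

Inductive hmove := HLeft | HRight | HStay.
Inductive dmove := DLeft | DRight | DUp | DDown | DStay.
Inductive action := Toggle0 | TogglePi | NoAction.

Inductive src := Off | On0 | OnPi.

(** A 2OIA.  Detector positions are stored in half-units:
    (dj0, dk0) stands for the grid point (dj0/2, dk0/2). *)
Record OIA := {
  Q : Type;
  Q_finite : exists l : list Q, forall q, In q l;
  q0 : Q;
  is_acc : Q -> bool;
  is_rej : Q -> bool;
  acc_rej_disjoint : forall q, ~ (is_acc q = true /\ is_rej q = true);
  delta : Q -> tsym -> bool -> Q * hmove * dmove * action;
  lambda : R;
  lambda_pos : 0 < lambda;
  amp : R;
  amp_pos : 0 < amp;
  dj0 : nat;
  dk0 : nat;
  kcrash : nat           (* the constant k of the non-transient toggle rule *)
}.

Section Semantics.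
Variable M : OIA.

(** Configurations.  [crun m] is the length of the current (still open) run
    of consecutive toggles of source m (0 if none), [ccnt m] the number of
    completed non-transient (odd-length) toggle runs on source m, and
    [ctime] the number of head moves plus detector moves made so far. *)
Record config := {
  cst : Q M;
  chead : nat;
  cdj : nat;
  cdk : nat;
  csrc : nat -> src;
  crun : nat -> nat;
  ccnt : nat -> nat;
  ctime : nat
}.

Variable w : list sym.
Definition N : nat := length w.

(** Tape contents: cent w_1 ... w_N dollar, in cells 0 .. N+1. *)
Definition tape (i : nat) : tsym :=
  match i with
  | O => Cent
  | S i' => if (i' <? N)%nat then Sym (nth i' w SA) else Dollar
  end.

(** Grid: both coordinates in {0, 1/2, ..., N+1}, i.e. half-units <= 2(N+1). *)
Definition in_grid (dj dk : nat) : bool :=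
  ((dj <=? 2 * (N + 1)) && (dk <=? 2 * (N + 1)))%nat.

(** Source m is seen by the detector at (dj/2, dk/2) iff |m - dj/2| <= dk/2. *)
Definition visible (dj dk m : nat) : bool :=
  ((2 * m <=? dj + dk) && (dj <=? 2 * m + dk))%nat.

Definition src_on (s : src) : bool := match s with Off => false | _ => true end.
Definition src_sign (s : src) : R := match s with OnPi => -1 | _ => 1 end.

Definition dist (dj dk m : nat) : R :=
  sqrt (((INR (2 * m) - INR dj) / 2) ^ 2 + (INR dk / 2) ^ 2).

(** Contributions A0 r^-1 e^{i(phi + 2 pi r / lambda)}, with e^{i pi} = -1. *)
Definition contrib_re (c : config) (m : nat) : R :=
  if visible (cdj c) (cdk c) m && src_on (csrc c m) then
    src_sign (csrc c m) * amp M / dist (cdj c) (cdk c) m *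
      cos (2 * PI * dist (cdj c) (cdk c) m / lambda M)
  else 0.
Definition contrib_im (c : config) (m : nat) : R :=
  if visible (cdj c) (cdk c) m && src_on (csrc c m) then
    src_sign (csrc c m) * amp M / dist (cdj c) (cdk c) m *
      sin (2 * PI * dist (cdj c) (cdk c) m / lambda M)
  else 0.

Definition sources : list nat := seq 0 (N + 2).

Definition resultant_re (c : config) : R :=
  fold_right Rplus 0 (map (contrib_re c) sources).
Definition resultant_im (c : config) : R :=
  fold_right Rplus 0 (map (contrib_im c) sources).

(** The resultant wave is nonzero.  A switched-on visible source located
    exactly at the detector (distance 0, infinite amplitude) counts as a
    nonzero signal. *)
Definition resultant_nonzero (c : config) : Prop :=
  (exists m, In m sources /\ visible (cdj c) (cdk c) m = true /\
             src_on (csrc c m) = true /\ dist (cdj c) (cdk c) m = 0)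
  \/ resultant_re c <> 0 \/ resultant_im c <> 0.

(** Detector output b (true = 1, false = 0). *)
Definition output (c : config) (b : bool) : Prop :=
  b = true <-> resultant_nonzero c.

Definition halting (c : config) : bool := is_acc M (cst c) || is_rej M (cst c).

Inductive step_result := Next (c : config) | Crash.

Definition toggle (phi : src) (s : src) : src :=
  match s with Off => phi | _ => Off end.

Definition move_head (h : nat) (d : hmove) : option nat :=
  match d with
  | HLeft => match h with O => None | S h' => Some h' end
  | HRight => if (h <? N + 1)%nat then Some (S h) else None
  | HStay => Some h
  end.

Definition move_det (dj dk : nat) (d : dmove) : option (nat * nat) :=
  let r := match d with
    | DLeft => match dj with O => None | S j => Some (j, dk) end
    | DRight => Some (S dj, dk)
    | DUp => Some (dj, S dk)
    | DDown => match dk with O => None | S k => Some (dj, k) end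
    | DStay => Some (dj, dk)
    end in
  match r with
  | Some (j, k) => if in_grid j k then Some (j, k) else None
  | None => None
  end.

Definition hcost (d : hmove) : nat := match d with HStay => 0 | _ => 1 end.
Definition dcost (d : dmove) : nat := match d with DStay => 0 | _ => 1 end.

(** The action acts on the
    source of the currently scanned cell.  A run of consecutive toggles of a
    source ends at the first step in which that source is not toggled; if it
    had odd length it is a completed non-transient sequence.  The machine
    crashes when some source completes its (kcrash+1)-th non-transient
    sequence, or when the head leaves the tape or the detector leaves the
    grid. *)
Definition step (c : config) (b : bool) : step_result :=
  match delta M (cst c) (tape (chead c)) b with
  | (q', hm, dm, a) =>
    let h := chead c in
    let tog m := match a with NoAction => false | _ => Nat.eqb m h end in
    let src' m := if tog m then
                    match a with Toggle0 => toggle On0 (csrc c m)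
                               | _ => toggle OnPi (csrc c m) end
                  else csrc c m in
    let run' m := if tog m then S (crun c m) else O in
    let cnt' m := if tog m then ccnt c m
                  else (ccnt c m + (if Nat.odd (crun c m) then 1 else 0))%nat in
    if existsb (fun m => kcrash M <? cnt' m)%nat sources then Crash else
    match move_head h hm, move_det (cdj c) (cdk c) dm with
    | Some h', Some (j', k') =>
        Next {| cst := q'; chead := h'; cdj := j'; cdk := k';
                csrc := src'; crun := run'; ccnt := cnt';
                ctime := (ctime c + hcost hm + dcost dm)%nat |}
    | _, _ => Crash
    end
  end.

(** At halting every open run is maximal, hence completed. *)
Definition final_ok (c : config) : bool :=
  negb (existsb (fun m => kcrash M <?
          ccnt c m + (if Nat.odd (crun c m) then 1 else 0))%nat sources).

(** Accepting and rejecting states are halting; the machine accepts iff it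
    halts in an accepting state with detector output 0 (and does not crash). *)
Inductive halts_from : config -> bool -> nat -> Prop :=
| HaltStop : forall c b, halting c = true -> output c b ->
    halts_from c (is_acc M (cst c) && final_ok c && negb b) (ctime c)
| HaltStep : forall c b c' r t, halting c = false -> output c b ->
    step c b = Next c' -> halts_from c' r t -> halts_from c r t
| HaltCrash : forall c b, halting c = false -> output c b ->
    step c b = Crash -> halts_from c false (ctime c).

Definition init : config :=
  {| cst := q0 M; chead := 0; cdj := dj0 M; cdk := dk0 M;
     csrc := fun _ => Off; crun := fun _ => O; ccnt := fun _ => O;
     ctime := 0 |}.

(** If the prescribed initial detector position is outside the grid of this
    input, the machine crashes at once (time 0). *)
Definition accepts : Prop :=
  in_grid (dj0 M) (dk0 M) = true /\ exists t, halts_from init true t.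

Definition rejects : Prop :=
  in_grid (dj0 M) (dk0 M) = false \/ exists t, halts_from init false t.

Definition halts_within (T : nat) : Prop :=
  in_grid (dj0 M) (dk0 M) = false \/
  exists r t, halts_from init r t /\ (t <= T)%nat.

End Semantics.

Definition recognizes (M : OIA) (L : list sym -> Prop) : Prop :=
  forall w, (L w -> accepts M w) /\ (~ L w -> rejects M w).

Definition Lexp (w : list sym) : Prop :=
  exists n : nat, w = repeat SA n ++ repeat SB (2 ^ n).

From Pilot Require Import Defs.
From Stdlib Require Import Reals List Arith Lia Bool.
Import ListNotations.
Local Open Scope nat_scope.

(* The detector is kept on the ground (height 0), where it sees exactly the source
   at its own abscissa.  Standing under the head it reads the source of the scanned
   cell as a one-bit mark, and since its steps are half cells it can also trail the
   head at half speed.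

   The a-block counts n rounds.  Round j starts with one marker lit at distance
   L = 2^j beyond the last a.  The head leaves the a-block at full speed with the
   detector following at half speed, so when the detector sees the marker the head
   is at distance 2L; a new marker is lit there, the detector catches up with it,
   and on the way back the old marker is switched off and the cells in between are
   checked to be b's.  After n rounds the input is accepted iff the marker stands
   on the end marker $ and no b-cell is lit.  Every source is toggled at most
   twice, so the machine never crashes on a valid run, and round j takes
   O(n + 2^j) moves, O(2^n) in all. *)

Section GroundedDetector.
Variable M : OIA.
Variable w : list sym.

Definition ground_output (lit : nat -> bool) (dj : nat) : bool :=
  if Nat.even dj then lit (Nat.div2 dj) else false.

Lemma ground_output_even lit i : ground_output lit (2 * i) = lit i.
Proof. unfold ground_output; rewrite Nat.even_mul, Nat.div2_double; reflexivity. Qed.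

Lemma ground_output_odd lit i : ground_output lit (S (2 * i)) = false.
Proof. unfold ground_output; rewrite Nat.even_succ, Nat.odd_mul; reflexivity. Qed.

Lemma ground_output_dark lit dj :
  (forall p, dj = 2 * p -> lit p = false) -> ground_output lit dj = false.
Proof.
  unfold ground_output; intros Hdark; destruct (Nat.even dj) eqn:E; [|reflexivity].
  apply Nat.even_spec in E as [p ->]; rewrite Nat.div2_double; auto.
Qed.

(* [budget m] bounds the toggles source [m] will still receive, which keeps the
   crash rule from firing. *)
Record grounded (c : config M) (q : Q M) (h dj : nat) (lit : nat -> bool)
    (budget : nat -> nat) (t : nat) : Prop := {
  grounded_state : cst M c = q;
  grounded_head : chead M c = h;
  grounded_dj : cdj M c = dj;
  grounded_dk : cdk M c = 0;
  grounded_dj_le : dj <= 2 * (Defs.N w + 1);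
  grounded_lit : forall m, src_on (csrc M c m) = lit m;
  grounded_budget : forall m, ccnt M c m + crun M c m + budget m <= kcrash M;
  grounded_time : ctime M c = t }.

Lemma visible_ground dj m : visible dj 0 m = (dj =? 2 * m).
Proof.
  unfold visible; rewrite !Nat.add_0_r.
  destruct (Nat.leb_spec (2 * m) dj), (Nat.leb_spec dj (2 * m)), (Nat.eqb_spec dj (2 * m));
    simpl; reflexivity || lia.
Qed.

Lemma fold_Rplus_map_zero (g : nat -> R) l :
  (forall m, g m = 0%R) -> fold_right Rplus 0%R (map g l) = 0%R.
Proof. intros Hg; induction l as [|m l IH]; simpl; [|rewrite Hg, IH]; ring. Qed.

Lemma resultant_dark c :
  (forall m, visible (cdj M c) (cdk M c) m && src_on (csrc M c m) = false) ->
  ~ resultant_nonzero M w c.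
Proof.
  intros Hdark [(m & _ & Hv & Hon & _) | [Hre | Him]].
  - specialize (Hdark m); rewrite Hv, Hon in Hdark; discriminate.
  - apply Hre, fold_Rplus_map_zero; intros m; unfold contrib_re; rewrite Hdark; reflexivity.
  - apply Him, fold_Rplus_map_zero; intros m; unfold contrib_im; rewrite Hdark; reflexivity.
Qed.

(* A lit source right beneath the detector is at distance 0: a nonzero signal. *)
Lemma output_grounded c q h dj lit f t :
  grounded c q h dj lit f t -> output M w c (ground_output lit dj).
Proof.
  intros [_ _ Hdj Hdk Hle Hlit _ _].
  assert (Hvis : forall m, visible (cdj M c) (cdk M c) m = (dj =? 2 * m))
    by (intros m; rewrite Hdj, Hdk; apply visible_ground).
  unfold output, ground_output.
  destruct (Nat.even dj) eqn:Heven.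
  - apply Nat.even_spec in Heven as [k ->]; rewrite Nat.div2_double.
    split.
    + intros Hk; left; exists k; repeat split.
      * apply in_seq; lia.
      * rewrite Hvis; apply Nat.eqb_refl.
      * rewrite Hlit; exact Hk.
      * rewrite Hdj, Hdk; unfold Defs.dist.
        replace (INR (2 * k) - INR (2 * k))%R with 0%R by ring.
        replace ((0 / 2) ^ 2 + (INR 0 / 2) ^ 2)%R with 0%R by (simpl; field).
        apply sqrt_0.
    + destruct (lit k) eqn:Hk; [reflexivity|].
      intros Hsignal; exfalso; revert Hsignal; apply resultant_dark.
      intros m; rewrite Hvis, Hlit.
      destruct (Nat.eqb_spec (2 * k) (2 * m)) as [E|]; [|reflexivity].
      replace m with k by lia; rewrite Hk; apply andb_false_r.
  - split; [discriminate|].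
    intros Hsignal; exfalso; revert Hsignal; apply resultant_dark.
    intros m; rewrite Hvis.
    destruct (Nat.eqb_spec dj (2 * m)) as [->|]; [|reflexivity].
    rewrite Nat.even_mul in Heven; discriminate.
Qed.

Lemma grounded_weaken c q h dj lit f t lit' f' :
  grounded c q h dj lit f t -> (forall m, lit m = lit' m) -> (forall m, f' m <= f m) ->
  grounded c q h dj lit' f' t.
Proof.
  intros [? ? ? ? ? Hlit Hf ?] Elit Ef; split; auto.
  - intros m; rewrite Hlit; apply Elit.
  - intros m; specialize (Hf m); specialize (Ef m); lia.
Qed.

Definition halts_sat (P : bool -> nat -> Prop) (c : config M) : Prop :=
  exists r t, halts_from M w c r t /\ P r t.

Definition toggles (a : action) (h m : nat) : bool :=
  match a with NoAction => false | _ => m =? h end.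
Definition lit_after a h (lit : nat -> bool) m :=
  if toggles a h m then negb (lit m) else lit m.
Definition budget_after a h (f : nat -> nat) m :=
  if toggles a h m then f m - 1 else f m.

Lemma odd_run_le k : (if Nat.odd k then 1 else 0) <= k.
Proof. destruct k as [|k]; [reflexivity|]; destruct (Nat.odd (S k)); lia. Qed.

Lemma move_det_le dj dk dm j k :
  move_det w dj dk dm = Some (j, k) -> j <= 2 * (Defs.N w + 1).
Proof.
  unfold move_det, in_grid; intros H.
  destruct dm; [destruct dj| | |destruct dk|]; cbn beta iota in H; try discriminate;
  match type of H with context [?x <=? ?b] =>
    destruct (Nat.leb_spec x b); [|discriminate] end;
  rewrite andb_true_l in H;
  match type of H with context [?y <=? ?b] =>
    destruct (y <=? b); [|discriminate] end;
  injection H as <- <-; assumption.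
Qed.

Lemma halts_sat_step c q h dj lit f t q' hm dm a h' dj' P :
  grounded c q h dj lit f t ->
  is_acc M q || is_rej M q = false ->
  delta M q (tape w h) (ground_output lit dj) = (q', hm, dm, a) ->
  move_head w h hm = Some h' ->
  move_det w dj 0 dm = Some (dj', 0) ->
  (a <> NoAction -> 1 <= f h) ->
  (forall c', grounded c' q' h' dj' (lit_after a h lit) (budget_after a h f)
                (t + hcost hm + dcost dm) -> halts_sat P c') ->
  halts_sat P c.
Proof.
  intros HG Hrun Hdelta Hh Hd Hf K.
  pose proof (output_grounded _ _ _ _ _ _ _ HG) as Hout.
  destruct HG as [Hq Hh0 Hdj Hdk Hle Hlit Hbud Ht].
  set (tog m := match a with NoAction => false | _ => m =? h end).
  set (c' := {| cst := q'; chead := h'; cdj := dj'; cdk := 0;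
    csrc m := if tog m then match a with Toggle0 => toggle On0 (csrc M c m)
                                       | _ => toggle OnPi (csrc M c m) end
              else csrc M c m;
    crun m := if tog m then S (crun M c m) else 0;
    ccnt m := if tog m then ccnt M c m
              else ccnt M c m + (if Nat.odd (crun M c m) then 1 else 0);
    ctime := ctime M c + hcost hm + dcost dm |} : config M).
  assert (Hstep : step M w c (ground_output lit dj) = Next M c').
  { unfold step; rewrite Hq, Hh0, Hdelta.
    match goal with |- context [existsb ?p ?l] => destruct (existsb p l) eqn:Hcrash end.
    - apply existsb_exists in Hcrash as (m & _ & Hm); apply Nat.ltb_lt in Hm.
      specialize (Hbud m); pose proof (odd_run_le (crun M c m)).
      destruct a; simpl in Hm; try lia; destruct (m =? h); lia.
    - rewrite Hh, Hdj, Hdk, Hd; reflexivity. }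
  destruct (K c') as (r & t' & Hhalt & HP).
  { split; simpl; try reflexivity.
    - exact (move_det_le _ _ _ _ _ Hd).
    - intros m; unfold lit_after, toggles; subst tog; simpl; rewrite <- Hlit.
      destruct a; try reflexivity; destruct (m =? h); try reflexivity;
      destruct (csrc M c m); reflexivity.
    - intros m; unfold budget_after, toggles; subst tog; simpl.
      specialize (Hbud m); pose proof (odd_run_le (crun M c m)).
      destruct a; try lia; destruct (Nat.eqb_spec m h) as [->|]; try lia;
      specialize (Hf ltac:(discriminate)); lia.
    - rewrite Ht; reflexivity. }
  exists r, t'; split; [|exact HP].
  apply (HaltStep M w c (ground_output lit dj) c'); try assumption.
  unfold halting; rewrite Hq; exact Hrun.
Qed.

Lemma halts_sat_move c q h dj lit f t q' hm dm h' dj' P :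
  grounded c q h dj lit f t ->
  is_acc M q || is_rej M q = false ->
  delta M q (tape w h) (ground_output lit dj) = (q', hm, dm, NoAction) ->
  move_head w h hm = Some h' ->
  move_det w dj 0 dm = Some (dj', 0) ->
  (forall c', grounded c' q' h' dj' lit f (t + hcost hm + dcost dm) -> halts_sat P c') ->
  halts_sat P c.
Proof.
  intros HG Hrun Hdelta Hh Hd K.
  apply (halts_sat_step _ _ _ _ _ _ _ _ _ _ _ _ _ _ HG Hrun Hdelta Hh Hd).
  - intros Hne; contradiction (Hne eq_refl).
  - intros c' HG'; apply K.
    eapply grounded_weaken; [exact HG' | reflexivity | reflexivity].
Qed.

Lemma halts_sat_reject c q h dj lit f t (P : bool -> nat -> Prop) :
  grounded c q h dj lit f t -> is_acc M q = false -> is_rej M q = true ->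
  P false t -> halts_sat P c.
Proof.
  intros HG Hacc Hrej HP.
  pose proof (output_grounded _ _ _ _ _ _ _ HG) as Hout.
  destruct HG as [Hq _ _ _ _ _ _ Ht].
  exists false, t; split; [|exact HP].
  assert (Hhalt : halting M c = true)
    by (unfold halting; rewrite Hq, Hrej, orb_true_r; reflexivity).
  pose proof (HaltStop M w c _ Hhalt Hout) as H; rewrite Hq, Hacc, Ht in H; exact H.
Qed.

Lemma halts_sat_accept c q h dj lit f t (P : bool -> nat -> Prop) :
  grounded c q h dj lit f t -> is_acc M q = true -> ground_output lit dj = false ->
  P true t -> halts_sat P c.
Proof.
  intros HG Hacc Hdark HP.
  pose proof (output_grounded _ _ _ _ _ _ _ HG) as Hout.
  destruct HG as [Hq _ _ _ _ _ Hbud Ht].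
  exists true, t; split; [|exact HP].
  assert (Hhalt : halting M c = true) by (unfold halting; rewrite Hq, Hacc; reflexivity).
  assert (Hfinal : final_ok M w c = true).
  { unfold final_ok; apply negb_true_iff.
    destruct (existsb _ _) eqn:Hcrash; [|reflexivity].
    apply existsb_exists in Hcrash as (m & _ & Hm); apply Nat.ltb_lt in Hm.
    specialize (Hbud m); pose proof (odd_run_le (crun M c m)); lia. }
  pose proof (HaltStop M w c _ Hhalt Hout) as H.
  rewrite Hq, Hacc, Ht, Hdark, Hfinal in H; exact H.
Qed.

Lemma halts_sat_head_crash c q h dj lit f t q' hm dm a (P : bool -> nat -> Prop) :
  grounded c q h dj lit f t -> is_acc M q || is_rej M q = false ->
  delta M q (tape w h) (ground_output lit dj) = (q', hm, dm, a) ->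
  move_head w h hm = None -> P false t -> halts_sat P c.
Proof.
  intros HG Hrun Hdelta Hh HP.
  pose proof (output_grounded _ _ _ _ _ _ _ HG) as Hout.
  destruct HG as [Hq Hh0 _ _ _ _ _ Ht].
  exists false, t; split; [|exact HP].
  rewrite <- Ht; apply (HaltCrash M w c (ground_output lit dj));
    [unfold halting; rewrite Hq; exact Hrun | exact Hout |].
  unfold step; rewrite Hq, Hh0, Hdelta.
  destruct (existsb _ _); [reflexivity|]; rewrite Hh; reflexivity.
Qed.

Lemma move_head_right h : h < Defs.N w + 1 -> move_head w h HRight = Some (S h).
Proof. intros H; unfold move_head; apply Nat.ltb_lt in H; rewrite H; reflexivity. Qed.

Lemma move_head_right_end : move_head w (Defs.N w + 1) HRight = None.
Proof. unfold move_head; rewrite Nat.ltb_irrefl; reflexivity. Qed.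

Lemma move_det_right dj : S dj <= 2 * (Defs.N w + 1) -> move_det w dj 0 DRight = Some (S dj, 0).
Proof. intros H; unfold move_det, in_grid; apply Nat.leb_le in H; rewrite H; reflexivity. Qed.

Lemma move_det_left dj : dj <= 2 * (Defs.N w + 1) -> move_det w (S dj) 0 DLeft = Some (dj, 0).
Proof. intros H; unfold move_det, in_grid; apply Nat.leb_le in H; rewrite H; reflexivity. Qed.

Lemma move_det_stay dj : dj <= 2 * (Defs.N w + 1) -> move_det w dj 0 DStay = Some (dj, 0).
Proof. intros H; unfold move_det, in_grid; apply Nat.leb_le in H; rewrite H; reflexivity. Qed.

End GroundedDetector.

Lemma tape_end w : tape w (Defs.N w + 1) = Dollar.
Proof.
  rewrite Nat.add_1_r; unfold tape; rewrite Nat.ltb_irrefl; reflexivity.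
Qed.

Lemma tape_inside w i : 1 <= i <= Defs.N w -> exists s, tape w i = Sym s.
Proof.
  destruct i as [|i]; intros Hi; [lia|].
  unfold tape; replace (i <? Defs.N w) with true by (symmetry; apply Nat.ltb_lt; lia).
  eauto.
Qed.

Lemma tape_sym_le w i s : tape w i = Sym s -> i <= Defs.N w.
Proof.
  destruct i as [|i]; [discriminate|]; unfold tape.
  destruct (Nat.ltb_spec i (Defs.N w)); [lia | discriminate].
Qed.

Inductive phase :=
  Scan | Plant | Return | Advance | Chase | Catch | Erase | Verify | VerifyB | Accept | Reject.

(* [HalfL x] and [HalfR x]: the head has moved a whole cell but the detector only
   half a cell; the next step completes the detector move and enters [At x]. *)
Inductive state := At (x : phase) | HalfL (x : phase) | HalfR (x : phase).

Definition phases : list phase :=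
  [Scan; Plant; Return; Advance; Chase; Catch; Erase; Verify; VerifyB; Accept; Reject].

Lemma state_finite : exists l : list state, forall q, In q l.
Proof.
  exists (map At phases ++ map HalfL phases ++ map HalfR phases).
  intros [x|x|x]; destruct x; simpl; tauto.
Qed.

Definition accepting (q : state) : bool := match q with At Accept => true | _ => false end.
Definition rejecting (q : state) : bool := match q with At Reject => true | _ => false end.

Lemma accepting_rejecting_disjoint q : ~ (accepting q = true /\ rejecting q = true).
Proof. destruct q as [x|x|x]; destruct x; simpl; intuition congruence. Qed.

Definition reject : state * hmove * dmove * action := (At Reject, HStay, DStay, NoAction).
Definition go_left (x : phase) (a : action) : state * hmove * dmove * action :=
  (HalfL x, HLeft, DLeft, a).
Definition go_right (x : phase) (a : action) : state * hmove * dmove * action :=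
  (HalfR x, HRight, DRight, a).

Definition transition (q : state) (s : tsym) (b : bool) : state * hmove * dmove * action :=
  match q with
  | HalfL x => (At x, HStay, DLeft, NoAction)
  | HalfR x => (At x, HStay, DRight, NoAction)
  | At x =>
    match x, s with
    | Scan, (Cent | Sym SA) => go_right Scan NoAction
    | Scan, Sym SB => go_right Plant NoAction
    | Plant, _ => go_left Return Toggle0
    | Return, Sym SB => go_left Return NoAction
    | Return, Sym SA => if b then go_left Return NoAction else go_right Advance Toggle0
    | Return, Cent => go_right Verify NoAction
    | Advance, (Cent | Sym SA) => go_right Advance NoAction
    | Advance, Sym SB => (At Chase, HRight, DRight, NoAction)
    | Chase, _ => if b then (At Catch, HStay, DRight, Toggle0)
                  else (At Chase, HRight, DRight, NoAction)
    | Catch, Sym SA => if b then reject else (At Catch, HStay, DRight, NoAction)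
    | Catch, _ => if b then go_left Erase NoAction else (At Catch, HStay, DRight, NoAction)
    | Erase, Sym SB => if b then go_left Return Toggle0 else go_left Erase NoAction
    | Verify, (Cent | Sym SA) => go_right Verify NoAction
    | Verify, Sym SB => if b then reject else go_right VerifyB NoAction
    | VerifyB, Sym SB => if b then reject else go_right VerifyB NoAction
    (* acceptance needs output 0, so the detector steps off the lit marker *)
    | VerifyB, Dollar => if b then (At Accept, HStay, DLeft, NoAction) else reject
    | (Accept | Reject), _ => (At x, HStay, DStay, NoAction)
    | _, _ => reject
    end
  end.

Definition doubler : OIA := {|
  Q := state; Q_finite := state_finite; q0 := At Scan;
  is_acc := accepting; is_rej := rejecting;
  acc_rej_disjoint := accepting_rejecting_disjoint;
  delta := transition; lambda := 1; lambda_pos := Rlt_0_1;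
  amp := 1; amp_pos := Rlt_0_1; dj0 := 0; dk0 := 0; kcrash := 2 |}.

Ltac move_to Q' HM DM H' DJ' :=
  eapply halts_sat_move with (q' := Q') (hm := HM) (dm := DM) (h' := H') (dj' := DJ');
  [eassumption | first [reflexivity | eassumption] | | | |].

Ltac toggle_to Q' HM DM A H' DJ' :=
  eapply halts_sat_step with (q' := Q') (hm := HM) (dm := DM) (a := A) (h' := H') (dj' := DJ');
  [eassumption | first [reflexivity | eassumption] | | | | |].

Section Walks.
Variable w : list sym.
Variable P : bool -> nat -> Prop.

Lemma walk_left x lit f lo k c t :
  accepting (At x) || rejecting (At x) = false ->
  (forall i, lo < i <= lo + k -> transition (At x) (tape w i) (lit i) = go_left x NoAction) ->
  lo + k <= Defs.N w + 1 ->
  grounded doubler w c (At x) (lo + k) (2 * (lo + k)) lit f t ->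
  (forall c', grounded doubler w c' (At x) lo (2 * lo) lit f (t + 3 * k) ->
     halts_sat doubler w P c') ->
  halts_sat doubler w P c.
Proof.
  revert c t; induction k as [|k IH]; intros c t Hrun Hstep Hle HG K.
  { apply K; rewrite Nat.add_0_r in HG; rewrite Nat.add_0_r; exact HG. }
  replace (lo + S k) with (S (lo + k)) in HG by lia.
  move_to (HalfL x) HLeft DLeft (lo + k) (S (2 * (lo + k))).
  { rewrite ground_output_even; apply Hstep; lia. }
  { reflexivity. }
  { replace (2 * S (lo + k)) with (S (S (2 * (lo + k)))) by lia; apply move_det_left; lia. }
  intros c1 HG1.
  move_to (At x) HStay DLeft (lo + k) (2 * (lo + k));
    [reflexivity | reflexivity | apply move_det_left; lia |].
  intros c2 HG2; eapply (IH c2 _ Hrun); [intros i Hi; apply Hstep; lia | lia | exact HG2 |].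
  intros c' HG'; apply K; replace (t + 3 * S k) with (t + 1 + 1 + 0 + 1 + 3 * k) by lia; exact HG'.
Qed.

Lemma walk_right x lit f lo k c t :
  accepting (At x) || rejecting (At x) = false ->
  (forall i, lo <= i < lo + k -> transition (At x) (tape w i) (lit i) = go_right x NoAction) ->
  lo + k <= Defs.N w + 1 ->
  grounded doubler w c (At x) lo (2 * lo) lit f t ->
  (forall c', grounded doubler w c' (At x) (lo + k) (2 * (lo + k)) lit f (t + 3 * k) ->
     halts_sat doubler w P c') ->
  halts_sat doubler w P c.
Proof.
  revert lo c t; induction k as [|k IH]; intros lo c t Hrun Hstep Hle HG K.
  { apply K; rewrite !Nat.add_0_r; exact HG. }
  move_to (HalfR x) HRight DRight (S lo) (S (2 * lo)).
  { rewrite ground_output_even; apply Hstep; lia. }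
  { apply move_head_right; lia. }
  { apply move_det_right; lia. }
  intros c1 HG1.
  move_to (At x) HStay DRight (S lo) (2 * S lo); [reflexivity | reflexivity | |].
  { replace (2 * S lo) with (S (S (2 * lo))) by lia; apply move_det_right; lia. }
  intros c2 HG2; eapply (IH (S lo) c2 _ Hrun); [intros i Hi; apply Hstep; lia | lia | exact HG2 |].
  intros c' HG'; apply K; replace (lo + S k) with (S lo + k) by lia.
  replace (t + 3 * S k) with (t + 1 + 1 + 0 + 1 + 3 * k) by lia; exact HG'.
Qed.

Lemma chase lit f k h dj c t :
  (forall i, i < k -> ground_output lit (dj + i) = false) ->
  h + k <= Defs.N w + 1 -> dj + k <= 2 * (Defs.N w + 1) ->
  grounded doubler w c (At Chase) h dj lit f t ->
  (forall c', grounded doubler w c' (At Chase) (h + k) (dj + k) lit f (t + 2 * k) ->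
     halts_sat doubler w P c') ->
  halts_sat doubler w P c.
Proof.
  revert h dj c t; induction k as [|k IH]; intros h dj c t Hdark Hh Hdj HG K.
  { apply K; rewrite !Nat.add_0_r; exact HG. }
  move_to (At Chase) HRight DRight (S h) (S dj).
  { pose proof (Hdark 0 ltac:(lia)) as Hdj0; rewrite Nat.add_0_r in Hdj0.
    rewrite Hdj0; reflexivity. }
  { apply move_head_right; lia. }
  { apply move_det_right; lia. }
  intros c1 HG1; eapply (IH (S h) (S dj) c1 _); [ | lia | lia | exact HG1 |].
  { intros i Hi; replace (S dj + i) with (dj + S i) by lia; apply Hdark; lia. }
  intros c' HG'; apply K; replace (h + S k) with (S h + k) by lia.
  replace (dj + S k) with (S dj + k) by lia.
  replace (t + 2 * S k) with (t + 1 + 1 + 2 * k) by lia; exact HG'.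
Qed.

Lemma catch lit f k h dj c t :
  (forall i, i < k -> ground_output lit (dj + i) = false) ->
  dj + k <= 2 * (Defs.N w + 1) ->
  grounded doubler w c (At Catch) h dj lit f t ->
  (forall c', grounded doubler w c' (At Catch) h (dj + k) lit f (t + k) ->
     halts_sat doubler w P c') ->
  halts_sat doubler w P c.
Proof.
  revert dj c t; induction k as [|k IH]; intros dj c t Hdark Hdj HG K.
  { apply K; rewrite !Nat.add_0_r; exact HG. }
  move_to (At Catch) HStay DRight h (S dj).
  { pose proof (Hdark 0 ltac:(lia)) as Hdj0; rewrite Nat.add_0_r in Hdj0.
    rewrite Hdj0; destruct (tape w h) as [| |[|]]; reflexivity. }
  { reflexivity. }
  { apply move_det_right; lia. }
  intros c1 HG1; eapply (IH (S dj) c1 _); [ | lia | exact HG1 |].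
  { intros i Hi; replace (S dj + i) with (dj + S i) by lia; apply Hdark; lia. }
  intros c' HG'; apply K; replace (dj + S k) with (S dj + k) by lia.
  replace (t + S k) with (t + 0 + 1 + k) by lia; exact HG'.
Qed.

Lemma reject_now q h dj lit f c t :
  grounded doubler w c q h dj lit f t -> accepting q || rejecting q = false ->
  transition q (tape w h) (ground_output lit dj) = reject -> P false t ->
  halts_sat doubler w P c.
Proof.
  intros HG Hrun Hdelta HP.
  move_to (At Reject) HStay DStay h dj; [exact Hdelta | reflexivity | |].
  { apply move_det_stay; exact (grounded_dj_le _ _ _ _ _ _ _ _ _ HG). }
  intros c' HG'; eapply halts_sat_reject; [exact HG' | reflexivity | reflexivity |].
  rewrite !Nat.add_0_r; exact HP.
Qed.

End Walks.

Ltac nat_cases := repeat match goal with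
  | |- context [?x =? ?y] => destruct (Nat.eqb_spec x y)
  | |- context [?x <? ?y] => destruct (Nat.ltb_spec x y)
  | |- context [?x <=? ?y] => destruct (Nat.leb_spec x y) end;
  simpl; try reflexivity; try lia.

Lemma square_le_pow2 n : n * n <= 2 * 2 ^ n.
Proof.
  induction n as [|n IH]; [simpl; lia|].
  destruct (Nat.le_gt_cases n 2) as [Hn|Hn].
  - destruct n as [|[|[|n]]]; simpl; lia.
  - rewrite Nat.pow_succ_r'; nia.
Qed.

Definition no_leading_a (s : list sym) : Prop := s = [] \/ exists r, s = SB :: r.

Section Input.
Variable n : nat.
Variable rest : list sym.

Definition word : list sym := repeat SA n ++ rest.

Lemma length_word : Defs.N word = n + length rest.
Proof. unfold Defs.N, word; rewrite length_app, repeat_length; reflexivity. Qed.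

Lemma tape_word_a i : 1 <= i <= n -> tape word i = Sym SA.
Proof.
  destruct i as [|i]; intros Hi; [lia|]; unfold tape; rewrite length_word.
  replace (i <? n + length rest) with true by (symmetry; apply Nat.ltb_lt; lia).
  unfold word; rewrite app_nth1 by (rewrite repeat_length; lia).
  rewrite nth_repeat; reflexivity.
Qed.

Lemma tape_word_rest k : k < length rest -> tape word (n + 1 + k) = Sym (nth k rest SA).
Proof.
  intros Hk; replace (n + 1 + k) with (S (n + k)) by lia; unfold tape; rewrite length_word.
  replace (n + k <? n + length rest) with true by (symmetry; apply Nat.ltb_lt; lia).
  unfold word; rewrite app_nth2 by (rewrite repeat_length; lia).
  rewrite repeat_length; replace (n + k - n) with k by lia; reflexivity.
Qed.

Definition in_lang : Prop := rest = repeat SB (2 ^ n).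

Lemma length_word_in_lang : in_lang -> Defs.N word = n + 2 ^ n.
Proof. intros E; rewrite length_word, E, repeat_length; reflexivity. Qed.

Lemma tape_word_in_lang i : in_lang -> n + 1 <= i <= Defs.N word -> tape word i = Sym SB.
Proof.
  intros E Hi; rewrite (length_word_in_lang E) in Hi.
  replace i with (n + 1 + (i - n - 1)) by lia.
  rewrite tape_word_rest by (rewrite E, repeat_length; lia).
  rewrite E, (nth_indep _ SA SB) by (rewrite repeat_length; lia).
  rewrite nth_repeat; reflexivity.
Qed.

Lemma tape_word_not_a_in_lang i :
  in_lang -> n + 1 <= i <= Defs.N word + 1 -> tape word i <> Sym SA.
Proof.
  intros E Hi; destruct (Nat.eq_dec i (Defs.N word + 1)) as [->|].
  - rewrite tape_end; discriminate.
  - rewrite tape_word_in_lang by (assumption || lia); discriminate.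
Qed.

Definition b_prefix (T : nat) : Prop :=
  (forall i, n + 1 <= i < T -> tape word i = Sym SB) /\ T <= Defs.N word + 1.

Lemma in_lang_of_b_prefix :
  b_prefix (n + 1 + 2 ^ n) -> tape word (n + 1 + 2 ^ n) = Dollar -> in_lang.
Proof.
  intros [Hb Hle] Hend.
  assert (HN : Defs.N word = n + 2 ^ n).
  { destruct (Nat.le_gt_cases (n + 1 + 2 ^ n) (Defs.N word)) as [H|H]; [|lia].
    destruct (tape_inside word (n + 1 + 2 ^ n)) as [s Hs]; [lia|].
    rewrite Hs in Hend; discriminate. }
  rewrite length_word in HN; unfold in_lang.
  replace (2 ^ n) with (length rest) by lia.
  apply Forall_eq_repeat, Forall_nth; intros k d Hk.
  rewrite (nth_indep _ d SA) by exact Hk.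
  pose proof (Hb (n + 1 + k) ltac:(lia)) as Hbk.
  rewrite tape_word_rest in Hbk by exact Hk; injection Hbk as ->; reflexivity.
Qed.

Definition verdict (r : bool) (t : nat) : Prop :=
  t <= 60 * 2 ^ n /\ (r = true <-> in_lang).

Lemma verdict_reject t : t <= 60 * 2 ^ n -> ~ in_lang -> verdict false t.
Proof. intros Ht Hout; split; [exact Ht|]; split; [discriminate | contradiction]. Qed.

(* Before round [j] the counter [lo = n - j] has lit the a-cells [lo+1 .. n] and
   the marker sits at [T = n + 1 + 2^j].  The budget is the number of toggles a
   source may still receive: one for an a-cell, two for a b-cell that has never
   carried the marker. *)
Definition lit_round (lo T m : nat) : bool := (lo <? m) && (m <=? n) || (m =? T).
Definition budget_round (lo T m : nat) : nat :=
  if m <=? n then (if lo <? m then 0 else 1)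
  else if m <? T then 0 else if m =? T then 1 else 2.

Definition lit_doubling (lo T T2 m : nat) : bool := lit_round lo T m || (m =? T2).
Definition budget_doubling (lo T T2 m : nat) : nat :=
  if m =? T2 then 1 else budget_round lo T m.

(* [3 n + 12] moves plant the first marker and round [i] takes at most
   [6 i + 12 * 2^i + 6] moves. *)
Definition round_time (j : nat) : nat := 3 * n + 12 + 3 * j * j + 6 * j + 12 * 2 ^ j.

Notation halts_ok := (halts_sat doubler word verdict).

Ltac marks :=
  unfold lit_after, budget_after, toggles, lit_doubling, budget_doubling, lit_round, budget_round;
  nat_cases.

Lemma tick_counter lo T c t :
  0 < lo <= n -> n < T -> tape word (n + 1) = Sym SB ->
  grounded doubler word c (At Return) n (2 * n) (lit_round lo T) (budget_round lo T) t ->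
  (forall c', grounded doubler word c' (At Chase) (n + 2) (2 * n + 3)
                (lit_round (lo - 1) T) (budget_round (lo - 1) T) (t + 6 * (n - lo) + 5) ->
     halts_ok c') ->
  halts_ok c.
Proof.
  intros Hlo HT Hb HG K.
  pose proof (tape_sym_le _ _ _ Hb) as HN.
  eapply (walk_left word verdict Return (lit_round lo T) (budget_round lo T) lo (n - lo));
    [reflexivity | | lia | |].
  { intros i Hi; rewrite tape_word_a by lia; marks. }
  { replace (lo + (n - lo)) with n by lia; exact HG. }
  intros c1 HG1.
  toggle_to (HalfR Advance) HRight DRight Toggle0 (S lo) (S (2 * lo)).
  { rewrite ground_output_even, tape_word_a by lia; marks. }
  { apply move_head_right; lia. }
  { apply move_det_right; lia. }
  { intros _; marks. }
  intros c2 HG2.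
  move_to (At Advance) HStay DRight (S lo) (2 * S lo); [reflexivity | reflexivity | |].
  { replace (2 * S lo) with (S (S (2 * lo))) by lia; apply move_det_right; lia. }
  intros c3 HG3.
  eapply (walk_right word verdict Advance (lit_round (lo - 1) T) (budget_round (lo - 1) T)
            (S lo) (n - lo)); [reflexivity | | lia | |].
  { intros i Hi; rewrite tape_word_a by lia; reflexivity. }
  { eapply grounded_weaken; [exact HG3 | |]; intros m; marks. }
  intros c4 HG4; replace (S lo + (n - lo)) with (n + 1) in HG4 by lia.
  move_to (At Chase) HRight DRight (n + 2) (2 * n + 3).
  { rewrite ground_output_even, Hb; reflexivity. }
  { replace (n + 2) with (S (n + 1)) by lia; apply move_head_right; lia. }
  { replace (2 * n + 3) with (S (2 * (n + 1))) by lia; apply move_det_right; lia. }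
  intros c' HG'; apply K.
  replace (t + 6 * (n - lo) + 5)
    with (t + 3 * (n - lo) + 1 + 1 + 0 + 1 + 3 * (n - lo) + 1 + 1) by lia.
  exact HG'.
Qed.

Lemma chase_off_tape lo L c t :
  Defs.N word + 1 < n + 1 + 2 * L -> 2 * L <= 2 ^ n -> n + 1 <= Defs.N word ->
  grounded doubler word c (At Chase) (n + 2) (2 * n + 3)
    (lit_round lo (n + 1 + L)) (budget_round lo (n + 1 + L)) t ->
  t + 4 * L <= 60 * 2 ^ n ->
  halts_ok c.
Proof.
  intros HT2 HLn HN HG Ht.
  eapply (chase word verdict _ _ (Defs.N word - (n + 1)) (n + 2) (2 * n + 3));
    [ | lia | lia | exact HG |].
  { intros i Hi; apply ground_output_dark; intros p Hp; marks. }
  intros c' HG'; replace (n + 2 + (Defs.N word - (n + 1))) with (Defs.N word + 1) in HG' by lia.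
  eapply halts_sat_head_crash; [exact HG' | reflexivity | | apply move_head_right_end |].
  { rewrite ground_output_dark by (intros p Hp; marks); reflexivity. }
  apply verdict_reject; [lia|].
  intros E; pose proof (length_word_in_lang E); lia.
Qed.

Lemma catch_new_marker lo L c t :
  0 < L -> n + 1 + 2 * L <= Defs.N word + 1 ->
  grounded doubler word c (At Catch) (n + 1 + 2 * L) (S (2 * (n + 1 + L)))
    (lit_doubling lo (n + 1 + L) (n + 1 + 2 * L))
    (budget_doubling lo (n + 1 + L) (n + 1 + 2 * L)) t ->
  t + 2 * L <= 60 * 2 ^ n ->
  (forall c', grounded doubler word c' (At Erase) (n + 2 * L) (2 * (n + 2 * L))
                (lit_doubling lo (n + 1 + L) (n + 1 + 2 * L))
                (budget_doubling lo (n + 1 + L) (n + 1 + 2 * L)) (t + 2 * L + 2) ->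
     halts_ok c') ->
  halts_ok c.
Proof.
  intros HL HT2 HG Ht K.
  eapply (catch word verdict _ _ (2 * L - 1) _ (S (2 * (n + 1 + L)))); [ | lia | exact HG |].
  { intros i Hi; apply ground_output_dark; intros p Hp; marks. }
  intros c1 HG1.
  replace (S (2 * (n + 1 + L)) + (2 * L - 1)) with (2 * (n + 1 + 2 * L)) in HG1 by lia.
  assert (Hlit : ground_output (lit_doubling lo (n + 1 + L) (n + 1 + 2 * L))
                   (2 * (n + 1 + 2 * L)) = true)
    by (rewrite ground_output_even; marks).
  assert (Hcell : tape word (n + 1 + 2 * L) = Sym SA \/
                  transition (At Catch) (tape word (n + 1 + 2 * L)) true = go_left Erase NoAction)
    by (destruct (tape word (n + 1 + 2 * L)) as [| |[|]]; auto).
  destruct Hcell as [Ha|Hcell].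
  { eapply reject_now; [exact HG1 | reflexivity | rewrite Ha, Hlit; reflexivity |].
    apply verdict_reject; [lia|].
    intros E; apply (tape_word_not_a_in_lang (n + 1 + 2 * L) E); [lia | exact Ha]. }
  move_to (HalfL Erase) HLeft DLeft (n + 2 * L) (S (2 * (n + 2 * L))).
  { rewrite Hlit; exact Hcell. }
  { replace (n + 1 + 2 * L) with (S (n + 2 * L)) by lia; reflexivity. }
  { replace (2 * (n + 1 + 2 * L)) with (S (S (2 * (n + 2 * L)))) by lia; apply move_det_left; lia. }
  intros c2 HG2.
  move_to (At Erase) HStay DLeft (n + 2 * L) (2 * (n + 2 * L)); [reflexivity | reflexivity | |].
  { apply move_det_left; lia. }
  intros c' HG'; apply K.
  replace (t + 2 * L + 2) with (t + (2 * L - 1) + 1 + 1 + 0 + 1) by lia; exact HG'.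
Qed.

Lemma double_marker lo L c t :
  0 < L -> 2 * L <= 2 ^ n -> n + 1 <= Defs.N word ->
  grounded doubler word c (At Chase) (n + 2) (2 * n + 3)
    (lit_round lo (n + 1 + L)) (budget_round lo (n + 1 + L)) t ->
  t + 6 * L <= 60 * 2 ^ n ->
  (forall c', n + 1 + 2 * L <= Defs.N word + 1 ->
     grounded doubler word c' (At Erase) (n + 2 * L) (2 * (n + 2 * L))
       (lit_doubling lo (n + 1 + L) (n + 1 + 2 * L))
       (budget_doubling lo (n + 1 + L) (n + 1 + 2 * L)) (t + 6 * L + 1) ->
     halts_ok c') ->
  halts_ok c.
Proof.
  intros HL HLn HN HG Ht K.
  destruct (Nat.le_gt_cases (n + 1 + 2 * L) (Defs.N word + 1)) as [HT2|HT2].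
  2: { eapply (chase_off_tape lo L); [exact HT2 | exact HLn | exact HN | exact HG | lia]. }
  eapply (chase word verdict _ _ (2 * L - 1) (n + 2) (2 * n + 3)); [ | lia | lia | exact HG |].
  { intros i Hi; apply ground_output_dark; intros p Hp; marks. }
  intros c1 HG1.
  replace (n + 2 + (2 * L - 1)) with (n + 1 + 2 * L) in HG1 by lia.
  replace (2 * n + 3 + (2 * L - 1)) with (2 * (n + 1 + L)) in HG1 by lia.
  toggle_to (At Catch) HStay DRight Toggle0 (n + 1 + 2 * L) (S (2 * (n + 1 + L))).
  { rewrite ground_output_even; marks. }
  { reflexivity. }
  { apply move_det_right; lia. }
  { intros _; marks. }
  intros c2 HG2.
  eapply (catch_new_marker lo L); [exact HL | exact HT2 | | |].
  { eapply grounded_weaken; [exact HG2 | |]; intros m; marks. }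
  { cbn [hcost dcost]; lia. }
  intros c' HG'; apply K; [exact HT2|].
  replace (t + 6 * L + 1) with (t + 2 * (2 * L - 1) + 0 + 1 + 2 * L + 2) by lia; exact HG'.
Qed.

Lemma erase_walk lit f T k c t :
  n < T -> T + k <= Defs.N word ->
  (forall i, T < i <= T + k -> lit i = false) ->
  grounded doubler word c (At Erase) (T + k) (2 * (T + k)) lit f t ->
  t + 3 * k <= 60 * 2 ^ n ->
  (forall c', (forall i, T < i <= T + k -> tape word i = Sym SB) ->
     grounded doubler word c' (At Erase) T (2 * T) lit f (t + 3 * k) -> halts_ok c') ->
  halts_ok c.
Proof.
  revert c t; induction k as [|k IH]; intros c t HT Hk Hdark HG Ht K.
  { rewrite Nat.add_0_r in HG; apply K; [intros i Hi; lia | rewrite Nat.add_0_r; exact HG]. }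
  replace (T + S k) with (S (T + k)) in * by lia.
  assert (Hoff : ground_output lit (2 * S (T + k)) = false)
    by (rewrite ground_output_even; apply Hdark; lia).
  destruct (tape word (S (T + k))) as [| |[|]] eqn:Hcell;
    try (eapply reject_now; [exact HG | reflexivity | rewrite Hcell, Hoff; reflexivity |];
         apply verdict_reject; [lia|];
         intros E; rewrite tape_word_in_lang in Hcell by (assumption || lia); discriminate).
  move_to (HalfL Erase) HLeft DLeft (T + k) (S (2 * (T + k))).
  { rewrite Hcell, Hoff; reflexivity. }
  { reflexivity. }
  { replace (2 * S (T + k)) with (S (S (2 * (T + k)))) by lia; apply move_det_left; lia. }
  intros c1 HG1.
  move_to (At Erase) HStay DLeft (T + k) (2 * (T + k)); [reflexivity | reflexivity | |].
  { apply move_det_left; lia. }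
  intros c2 HG2; eapply (IH c2 _ HT);
    [lia | intros i Hi; apply Hdark; lia | exact HG2 | cbn [hcost dcost]; lia |].
  intros c' Hb HG'; apply K.
  - intros i Hi; destruct (Nat.eq_dec i (S (T + k))) as [->|]; [exact Hcell | apply Hb; lia].
  - replace (t + 3 * S k) with (t + 1 + 1 + 0 + 1 + 3 * k) by lia; exact HG'.
Qed.

Lemma erase_marker lo L c t :
  0 < L -> b_prefix (n + 1 + L) -> n + 1 + 2 * L <= Defs.N word + 1 ->
  grounded doubler word c (At Erase) (n + 2 * L) (2 * (n + 2 * L))
    (lit_doubling lo (n + 1 + L) (n + 1 + 2 * L))
    (budget_doubling lo (n + 1 + L) (n + 1 + 2 * L)) t ->
  t + 6 * L <= 60 * 2 ^ n ->
  (forall c', b_prefix (n + 1 + 2 * L) ->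
     grounded doubler word c' (At Return) n (2 * n)
       (lit_round lo (n + 1 + 2 * L)) (budget_round lo (n + 1 + 2 * L)) (t + 6 * L) ->
     halts_ok c') ->
  halts_ok c.
Proof.
  intros HL [Hb HT] HT2 HG Ht K.
  eapply (erase_walk (lit_doubling lo (n + 1 + L) (n + 1 + 2 * L))
            (budget_doubling lo (n + 1 + L) (n + 1 + 2 * L)) (n + 1 + L) (L - 1) c t);
    [lia | lia | | | lia |].
  { intros i Hi; marks. }
  { replace (n + 1 + L + (L - 1)) with (n + 2 * L) by lia; exact HG. }
  intros c1 Hb1 HG1.
  assert (Hlit : ground_output (lit_doubling lo (n + 1 + L) (n + 1 + 2 * L))
                   (2 * (n + 1 + L)) = true)
    by (rewrite ground_output_even; marks).
  destruct (tape word (n + 1 + L)) as [| |[|]] eqn:Hcell;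
    try (eapply reject_now; [exact HG1 | reflexivity | rewrite Hcell, Hlit; reflexivity |];
         apply verdict_reject; [lia|];
         intros E; rewrite tape_word_in_lang in Hcell by (assumption || lia); discriminate).
  toggle_to (HalfL Return) HLeft DLeft Toggle0 (n + L) (S (2 * (n + L))).
  { rewrite Hcell, Hlit; reflexivity. }
  { replace (n + 1 + L) with (S (n + L)) by lia; reflexivity. }
  { replace (2 * (n + 1 + L)) with (S (S (2 * (n + L)))) by lia; apply move_det_left; lia. }
  { intros _; marks. }
  intros c2 HG2.
  move_to (At Return) HStay DLeft (n + L) (2 * (n + L)); [reflexivity | reflexivity | |].
  { apply move_det_left; lia. }
  intros c3 HG3.
  eapply (walk_left word verdict Return
            (lit_round lo (n + 1 + 2 * L)) (budget_round lo (n + 1 + 2 * L))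
            n L); [reflexivity | | lia | |].
  { intros i Hi; rewrite Hb by lia; reflexivity. }
  { eapply grounded_weaken; [exact HG3 | |]; intros m; marks. }
  intros c' HG'; apply K.
  - split; [|exact HT2]; intros i Hi.
    destruct (Nat.lt_trichotomy i (n + 1 + L)) as [Hlt|[->|Hgt]];
      [apply Hb; lia | exact Hcell | apply Hb1; lia].
  - replace (t + 6 * L) with (t + 3 * (L - 1) + 1 + 1 + 0 + 1 + 3 * L) by lia; exact HG'.
Qed.

Definition before_round (j : nat) (c : config doubler) (t : nat) : Prop :=
  grounded doubler word c (At Return) n (2 * n)
    (lit_round (n - j) (n + 1 + 2 ^ j)) (budget_round (n - j) (n + 1 + 2 ^ j)) t /\
  t <= round_time j /\ b_prefix (n + 1 + 2 ^ j).

Lemma round_time_succ j : round_time j + 6 * j + 12 * 2 ^ j + 6 <= round_time (S j).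
Proof. unfold round_time; rewrite Nat.pow_succ_r'; nia. Qed.

Lemma round_time_mono i j : i <= j -> round_time i <= round_time j.
Proof.
  intros Hij; unfold round_time.
  pose proof (Nat.pow_le_mono_r 2 i j ltac:(lia) Hij); nia.
Qed.

Lemma round_time_final : round_time n + 6 * n + 3 * 2 ^ n + 6 <= 60 * 2 ^ n.
Proof.
  unfold round_time; pose proof (square_le_pow2 n); pose proof (Nat.pow_gt_lin_r 2 n ltac:(lia)).
  nia.
Qed.

Lemma doubling_round j c t :
  j < n -> before_round j c t ->
  (forall c' t', before_round (S j) c' t' -> halts_ok c') -> halts_ok c.
Proof.
  intros Hj (HG & Ht & Hb) K.
  pose proof (Nat.pow_le_mono_r 2 (S j) n ltac:(lia) Hj) as Hpow; rewrite Nat.pow_succ_r' in Hpow.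
  pose proof (Nat.pow_nonzero 2 j ltac:(lia)) as HL.
  pose proof (round_time_succ j) as Hstep; pose proof (round_time_mono (S j) n Hj) as Hmono.
  pose proof round_time_final as Hfinal.
  assert (Hb1 : tape word (n + 1) = Sym SB) by (apply (proj1 Hb); lia).
  eapply (tick_counter (n - j) (n + 1 + 2 ^ j)); [lia | lia | exact Hb1 | exact HG |].
  intros c1 HG1.
  eapply (double_marker (n - j - 1) (2 ^ j));
    [lia | lia | exact (tape_sym_le _ _ _ Hb1) | exact HG1 | lia |].
  intros c2 HT2 HG2.
  eapply (erase_marker (n - j - 1) (2 ^ j)); [lia | exact Hb | exact HT2 | exact HG2 | lia |].
  intros c' Hb' HG'; apply (K c' (t + 6 * (n - (n - j)) + 5 + 6 * 2 ^ j + 1 + 6 * 2 ^ j)).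
  unfold before_round; rewrite Nat.pow_succ_r'; replace (n - S j) with (n - j - 1) by lia.
  split; [exact HG' | split; [lia | exact Hb']].
Qed.

Lemma rewind T c t :
  n < T ->
  grounded doubler word c (At Return) n (2 * n) (lit_round 0 T) (budget_round 0 T) t ->
  (forall c', grounded doubler word c' (At Verify) (n + 1) (2 * (n + 1))
                (lit_round 0 T) (budget_round 0 T) (t + 6 * n + 3) -> halts_ok c') ->
  halts_ok c.
Proof.
  intros HT HG K.
  pose proof (grounded_dj_le _ _ _ _ _ _ _ _ _ HG) as Hle.
  eapply (walk_left word verdict Return (lit_round 0 T) (budget_round 0 T) 0 n);
    [reflexivity | | lia | exact HG |].
  { intros i Hi; rewrite tape_word_a by lia; marks. }
  intros c1 HG1.
  move_to (HalfR Verify) HRight DRight 1 1; [reflexivity | apply move_head_right; lia | |].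
  { apply move_det_right; lia. }
  intros c2 HG2.
  move_to (At Verify) HStay DRight 1 2; [reflexivity | reflexivity | apply move_det_right; lia |].
  intros c3 HG3.
  eapply (walk_right word verdict Verify (lit_round 0 T) (budget_round 0 T) 1 n);
    [reflexivity | | rewrite length_word; lia | exact HG3 |].
  { intros i Hi; rewrite tape_word_a by lia; reflexivity. }
  intros c' HG'; apply K; rewrite Nat.add_comm in HG'.
  replace (t + 6 * n + 3) with (t + 3 * n + 1 + 1 + 0 + 1 + 3 * n) by lia; exact HG'.
Qed.

Lemma verify_marker c t :
  b_prefix (n + 1 + 2 ^ n) ->
  grounded doubler word c (At Verify) (n + 1) (2 * (n + 1))
    (lit_round 0 (n + 1 + 2 ^ n)) (budget_round 0 (n + 1 + 2 ^ n)) t ->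
  t + 3 * 2 ^ n + 1 <= 60 * 2 ^ n ->
  halts_ok c.
Proof.
  intros [Hb HT] HG Ht.
  pose proof (Nat.pow_nonzero 2 n ltac:(lia)) as Hpow.
  move_to (HalfR VerifyB) HRight DRight (S (n + 1)) (S (2 * (n + 1))).
  { rewrite ground_output_even, Hb by lia; marks. }
  { apply move_head_right; lia. }
  { apply move_det_right; lia. }
  intros c1 HG1.
  move_to (At VerifyB) HStay DRight (S (n + 1)) (2 * S (n + 1)); [reflexivity | reflexivity | |].
  { replace (2 * S (n + 1)) with (S (S (2 * (n + 1)))) by lia; apply move_det_right; lia. }
  intros c2 HG2.
  eapply (walk_right word verdict VerifyB
            (lit_round 0 (n + 1 + 2 ^ n)) (budget_round 0 (n + 1 + 2 ^ n))
            (S (n + 1)) (2 ^ n - 1)); [reflexivity | | lia | exact HG2 |].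
  { intros i Hi; rewrite Hb by lia; marks. }
  intros c3 HG3; replace (S (n + 1) + (2 ^ n - 1)) with (n + 1 + 2 ^ n) in HG3 by lia.
  assert (Hlit : ground_output (lit_round 0 (n + 1 + 2 ^ n)) (2 * (n + 1 + 2 ^ n)) = true)
    by (rewrite ground_output_even; marks).
  destruct (tape word (n + 1 + 2 ^ n)) as [| |[|]] eqn:Hcell;
    try (eapply reject_now; [exact HG3 | reflexivity | rewrite Hcell, Hlit; reflexivity |];
         apply verdict_reject; [cbn [hcost dcost]; lia|];
         intros E; replace (n + 1 + 2 ^ n) with (Defs.N word + 1) in Hcell
           by (rewrite (length_word_in_lang E); lia);
         rewrite tape_end in Hcell; discriminate).
  move_to (At Accept) HStay DLeft (n + 1 + 2 ^ n) (S (2 * (n + 2 ^ n)));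
    [rewrite Hcell, Hlit; reflexivity | reflexivity | |].
  { replace (2 * (n + 1 + 2 ^ n)) with (S (S (2 * (n + 2 ^ n)))) by lia; apply move_det_left; lia. }
  intros c' HG'; eapply halts_sat_accept; [exact HG' | reflexivity | apply ground_output_odd |].
  split; [cbn [hcost dcost]; lia|].
  split; [intros _; apply in_lang_of_b_prefix; [split|]; assumption | reflexivity].
Qed.

Lemma final_check c t : before_round n c t -> halts_ok c.
Proof.
  intros (HG & Ht & Hb); rewrite Nat.sub_diag in HG.
  pose proof round_time_final.
  eapply (rewind (n + 1 + 2 ^ n)); [lia | exact HG |].
  intros c' HG'; eapply verify_marker; [exact Hb | exact HG' | lia].
Qed.

Lemma rounds_from j c t : j <= n -> before_round j c t -> halts_ok c.
Proof.
  remember (n - j) as d eqn:Hd; revert j c t Hd.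
  induction d as [|d IH]; intros j c t Hd Hj H.
  - replace j with n in H by lia; exact (final_check c t H).
  - apply (doubling_round j c t ltac:(lia) H); intros c' t'; apply (IH (S j)); lia.
Qed.

Lemma plant_marker c t :
  tape word (n + 1) = Sym SB ->
  grounded doubler word c (At Scan) (n + 1) (2 * (n + 1)) (fun _ => false) (fun _ => 2) t ->
  (forall c', grounded doubler word c' (At Return) n (2 * n)
                (lit_round n (n + 2)) (budget_round n (n + 2)) (t + 9) -> halts_ok c') ->
  halts_ok c.
Proof.
  intros Hb1 HG K.
  pose proof (tape_sym_le _ _ _ Hb1) as HN.
  move_to (HalfR Plant) HRight DRight (n + 2) (S (2 * (n + 1)));
    [rewrite Hb1; reflexivity
    | replace (n + 2) with (S (n + 1)) by lia; apply move_head_right; lia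
    | apply move_det_right; lia |].
  intros c1 HG1.
  move_to (At Plant) HStay DRight (n + 2) (2 * (n + 2)); [reflexivity | reflexivity | |].
  { replace (2 * (n + 2)) with (S (S (2 * (n + 1)))) by lia; apply move_det_right; lia. }
  intros c2 HG2.
  toggle_to (HalfL Return) HLeft DLeft Toggle0 (n + 1) (S (2 * (n + 1)));
    [reflexivity | replace (n + 2) with (S (n + 1)) by lia; reflexivity
    | | intros _; cbv beta; lia |].
  { replace (2 * (n + 2)) with (S (S (2 * (n + 1)))) by lia; apply move_det_left; lia. }
  intros c3 HG3.
  move_to (At Return) HStay DLeft (n + 1) (2 * (n + 1)); [reflexivity | reflexivity | |].
  { apply move_det_left; lia. }
  intros c4 HG4.
  eapply (walk_left word verdict Return (lit_round n (n + 2)) (budget_round n (n + 2)) n 1);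
    [reflexivity | | lia | |].
  { intros i Hi; replace i with (n + 1) by lia; rewrite Hb1; reflexivity. }
  { eapply grounded_weaken; [exact HG4 | |]; intros m; marks. }
  intros c' HG'; apply K; replace (t + 9) with (t + 1 + 1 + 0 + 1 + 1 + 1 + 0 + 1 + 3 * 1) by lia.
  exact HG'.
Qed.

Lemma doubler_correct (Hrest : no_leading_a rest) :
  halts_ok (init doubler).
Proof.
  assert (HG : grounded doubler word (init doubler) (At Scan) 0 0 (fun _ => false) (fun _ => 2) 0)
    by (split; simpl; intros; reflexivity || lia).
  eapply (walk_right word verdict Scan (fun _ => false) (fun _ => 2) 0 (n + 1));
    [reflexivity | | rewrite length_word; lia | exact HG |].
  { intros [|i] Hi; [reflexivity|]; rewrite tape_word_a by lia; reflexivity. }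
  intros c1 HG1; rewrite Nat.add_0_l in HG1.
  destruct Hrest as [Hnil | (r & Hb)].
  - eapply reject_now; [exact HG1 | reflexivity | |].
    + replace (n + 1) with (Defs.N word + 1) by (rewrite length_word, Hnil; simpl; lia).
      rewrite tape_end; reflexivity.
    + pose proof (Nat.pow_gt_lin_r 2 n ltac:(lia)).
      apply verdict_reject; [lia|].
      intros E; unfold in_lang in E; rewrite Hnil in E.
      pose proof (f_equal (@length sym) E) as Hlen.
      rewrite repeat_length in Hlen; simpl in Hlen; lia.
  - assert (Hb1 : tape word (n + 1) = Sym SB)
      by (pose proof (tape_word_rest 0) as H; rewrite Hb, Nat.add_0_r in H; apply H; simpl; lia).
    apply (plant_marker c1 _ Hb1 HG1); intros c2 HG2.
    eapply (rounds_from 0 c2); [lia |].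
    unfold before_round; rewrite Nat.sub_0_r; replace (n + 1 + 2 ^ 0) with (n + 2) by (simpl; lia).
    split; [exact HG2 | split].
    + unfold round_time; simpl Nat.pow; lia.
    + pose proof (tape_sym_le _ _ _ Hb1).
      split; [intros i Hi; replace i with (n + 1) by lia; exact Hb1 | lia].
Qed.

End Input.

Lemma split_leading_a w :
  exists n rest, w = repeat SA n ++ rest /\ no_leading_a rest.
Proof.
  induction w as [|[|] w IH].
  - exists 0, []; split; [reflexivity | left; reflexivity].
  - destruct IH as (n & rest & -> & Hrest); exists (S n), rest; auto.
  - exists 0, (SB :: w); split; [reflexivity | right; eauto].
Qed.

Lemma leading_a_unique n k rest rest' :
  no_leading_a rest -> no_leading_a rest' ->
  repeat SA n ++ rest = repeat SA k ++ rest' -> n = k /\ rest = rest'.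
Proof.
  intros Hrest Hrest'; revert k; induction n as [|n IH]; intros [|k] E; simpl in E.
  - auto.
  - destruct Hrest as [->|(r & ->)]; discriminate.
  - destruct Hrest' as [->|(r & ->)]; discriminate.
  - injection E as E; destruct (IH k E); auto.
Qed.

Lemma Lexp_iff_in_lang n rest :
  no_leading_a rest ->
  Lexp (repeat SA n ++ rest) <-> in_lang n rest.
Proof.
  intros Hrest; split.
  - intros (k & Ek).
    assert (Hb : no_leading_a (repeat SB (2 ^ k))).
    { right; pose proof (Nat.pow_nonzero 2 k ltac:(lia)).
      destruct (2 ^ k) as [|p]; [lia | simpl; eauto]. }
    destruct (leading_a_unique _ _ _ _ Hrest Hb Ek) as [-> ->]; reflexivity.
  - intros E; exists n; rewrite E; reflexivity.
Qed.

Theorem corollary2 :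
  exists M : OIA,
    recognizes M Lexp /\
    exists C : nat, forall n m : nat,
      halts_within M (repeat SA n ++ repeat SB m) (C * 2 ^ n).
Proof.
  exists doubler; split.
  - intros w; destruct (split_leading_a w) as (n & rest & -> & Hrest).
    destruct (doubler_correct n rest Hrest) as (r & t & Hrun & _ & Hr).
    rewrite (Lexp_iff_in_lang n rest Hrest); split.
    + intros Hin; split; [reflexivity|]; exists t.
      replace true with r by (apply Hr; exact Hin); exact Hrun.
    + intros Hout; right; exists t; destruct r; [|exact Hrun].
      contradiction (Hout (proj1 Hr eq_refl)).
  - exists 60%nat; intros n m; right.
    assert (Hrest : no_leading_a (repeat SB m)) by (destruct m; [left | right]; simpl; eauto).
    destruct (doubler_correct n (repeat SB m) Hrest) as (r & t & Hrun & Ht & _).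
    exists r, t; split; assumption.
Qed.
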